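(* For all $v,w\in\mathfrak{H}^1$, \[ v\stackrel{t}{\ast}_\hbar w=(S_\hbar^t)^{-1}\bigl(S_\hbar^t(v)\ast_+S_\hbar^t(w)\bigr). \]
   Context: Let $\hbar,t$ be formal variables and $\mathfrak{H}=\mathbb{Q}[\hbar,t]\langle x,y\rangle$ the noncommutative polynomial algebra over $\mathbb{Q}[\hbar,t]$; put $\mathfrak{H}^1=\mathbb{Q}[\hbar,t]+\mathfrak{H}y$ and $z_j=x^{j-1}y$ ($j\ge1$). Let $\mathfrak z$ be the $\mathbb{Q}[\hbar,t]$-span of $\{z_j\}$ with bilinear product $z_i\circ_+ z_j=z_{i+j}+\hbar z_{i+j-1}$, extended to an action on $\mathfrak{H}^1$ by $z_i\circ_+1=0$, $z_i\circ_+(z_jw)=(z_i\circ_+z_j)w$. Let $S_\hbar^t:\mathfrak{H}^1\to\mathfrak{H}^1$ be the $\mathbb{Q}[\hbar,t]$-linear map with $S_\hbar^t(1)=1$ and $S_\hbar^t(z_kw)=z_kS_\hbar^t(w)+t\,z_k\circ_+S_\hbar^t(w)$ for words $w\in\mathfrak{H}^1$ (it is bijective). The product $\ast_+$ on $\mathfrak{H}^1$ is the $\mathbb{Q}[\hbar,t]$-bilinear product with $1\ast_+w=w\ast_+1=w$ and $z_iu\ast_+z_jv=z_i(u\ast_+z_jv)+z_j(z_iu\ast_+v)+(z_i\circ_+z_j)(u\ast_+v)$ for words $u,v,w$. The product $\stackrel{t}{\ast}_\hbar$ on $\mathfrak{H}^1$ is the $\mathbb{Q}[\hbar,t]$-bilinear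 product with $1\stackrel{t}{\ast}_\hbar w=w\stackrel{t}{\ast}_\hbar1=w$ and $z_iu\stackrel{t}{\ast}_\hbar z_jv=z_i(u\stackrel{t}{\ast}_\hbar z_jv)+z_j(z_iu\stackrel{t}{\ast}_\hbar v)+(1-2t)(z_i\circ_+z_j)(u\stackrel{t}{\ast}_\hbar v)+(t^2-t)\,z_i\circ_+z_j\circ_+(u\stackrel{t}{\ast}_\hbar v)$ for $i,j\ge1$ and words $u,v,w$ (here $z_i\circ_+z_j\circ_+X$ means $(z_i\circ_+z_j)\circ_+X$, and $(z_i\circ_+z_j)X$ denotes concatenation). *)

From HB Require Import structures.
From mathcomp Require Import all_boot all_algebra.
From mathcomp Require Import finmap monalg.
Set Implicit Arguments. Unset Strict Implicit. Unset Printing Implicit Defensive.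
Import GRing.Theory.
Local Open Scope ring_scope.

(* Coefficient ring Q[hbar,t] := (Q[hbar])[t]. *)
Notation Rht := {poly {poly rat}}.
Definition hbar : Rht := ('X)%:P.
Definition tt : Rht := 'X.

(* Words in the letters z_j (j >= 1); the natural number a encodes z_(a+1).
   A word z_(a1+1) ... z_(an+1) is the sequence [:: a1; ...; an]. *)
Definition W := seq nat.

Notation H1 := {malg Rht[W]}.

Definition word (w : W) : H1 := << w >>.

Definition mlin (f : W -> H1) (p : H1) : H1 :=
  \sum_(k <- msupp p) p@_k *: f k.
Definition mbil (f : W -> W -> H1) (p q : H1) : H1 :=
  mlin (fun u => mlin (f u) q) p.

(* (z_(a+1) o_+ z_(b+1)) w = z_(a+b+2) w + hbar z_(a+b+1) w *)
Definition circw (a b : nat) (w : W) : H1 :=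
  word ((a + b).+1 :: w) + hbar *: word ((a + b)%N :: w).

(* z_(a+1) o_+ X, with z o_+ 1 = 0 *)
Definition circ_letter (a : nat) (X : H1) : H1 :=
  mlin (fun w => if w is b :: w' then circw a b w' else 0) X.

(* (z_(a+1) o_+ z_(b+1)) o_+ X *)
Definition circ2 (a b : nat) (X : H1) : H1 :=
  circ_letter (a + b).+1 X + hbar *: circ_letter (a + b) X.

Definition cons_letter (a : nat) (X : H1) : H1 :=
  mlin (fun w => word (a :: w)) X.

Definition circ_cons (a b : nat) (X : H1) : H1 := mlin (circw a b) X.

Fixpoint starp_w (u : W) : W -> H1 :=
  match u with
  | [::] => word
  | a :: u' =>
    fix sp_in (v : W) : H1 :=
      match v with
      | [::] => word (a :: u')
      | b :: v' => cons_letter a (starp_w u' (b :: v'))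
                   + cons_letter b (sp_in v')
                   + circ_cons a b (starp_w u' v')
      end
  end.
Definition starp (p q : H1) : H1 := mbil starp_w p q.

Fixpoint start_w (u : W) : W -> H1 :=
  match u with
  | [::] => word
  | a :: u' =>
    fix st_in (v : W) : H1 :=
      match v with
      | [::] => word (a :: u')
      | b :: v' => cons_letter a (start_w u' (b :: v'))
                   + cons_letter b (st_in v')
                   + (1 - 2%:R * tt) *: circ_cons a b (start_w u' v')
                   + (tt ^+ 2 - tt) *: circ2 a b (start_w u' v')
      end
  end.
Definition start (p q : H1) : H1 := mbil start_w p q.

Fixpoint S_w (w : W) : H1 :=
  match w with
  | [::] => word [::]
  | a :: w' => cons_letter a (S_w w') + tt *: circ_letter a (S_w w')
  end.
Definition S (p : H1) : H1 := mlin S_w p.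

From HB Require Import structures.
From mathcomp Require Import all_boot all_algebra.
From mathcomp Require Import finmap monalg.
From mathcomp Require Import ring.
Set Implicit Arguments. Unset Strict Implicit. Unset Printing Implicit Defensive.
Import GRing.Theory.
Local Open Scope ring_scope.

(* Write C_a for concatenation with z_(a+1) on the left and O_a for z_(a+1) o_+ -.
   S^c, defined by S^c(z_k w) = z_k S^c(w) + c z_k o_+ S^c(w), commutes with every
   O_a, and from this S^c o S^d = S^(c+d); hence S = S^t is bijective with inverse
   S^(-t).  For the product formula, O_a is a derivation of *_+ up to a correction
   term: P(O_a X, C_b Y) = O_a P(X, C_b Y) + C_b P(O_a X, Y) - O_a C_b P(X, Y), and
   similarly for (C_a, O_b) and (O_a, O_b), where P is *_+.  Checking these on the
   spanning words 1 and C_c W, expanding S(C_a X) = (C_a + t O_a) S X and comparing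
   with the recursion of *^t_hbar gives S(v *^t_hbar w) = S v *_+ S w by induction
   on the lengths of the words v and w. *)

(** * Linear identities by [ring] in the trivial extension *)

(* R x V with (a, u)(b, v) = (ab, av + bu) is a commutative ring into which V
   embeds additively, turning identities that are linear in atoms of V into ring
   identities. *)
Definition triv_ext (R : comNzRingType) (V : lmodType R) := (R * V)%type.
HB.instance Definition _ (R : comNzRingType) (V : lmodType R) :=
  GRing.Zmodule.on (triv_ext V).

Section TrivialExtension.
Variables (R : comNzRingType) (V : lmodType R).
Implicit Types (x y z : triv_ext V).

Definition triv_ext_one : triv_ext V := (1, 0).
Definition triv_ext_mul x y : triv_ext V := (x.1 * y.1, x.1 *: y.2 + y.1 *: x.2).

Fact triv_ext_mulA : associative triv_ext_mul.
Proof.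
move=> [a u] [b v] [c w]; rewrite /triv_ext_mul /= mulrA !scalerDr !scalerA.
by rewrite addrA [c * a]mulrC [c * b]mulrC.
Qed.

Fact triv_ext_mulC : commutative triv_ext_mul.
Proof. by move=> [a u] [b v]; rewrite /triv_ext_mul /= mulrC addrC. Qed.

Fact triv_ext_mul1 : left_id triv_ext_one triv_ext_mul.
Proof. by move=> [a u]; rewrite /triv_ext_mul /= mul1r scale1r scaler0 addr0. Qed.

Fact triv_ext_mulDl : left_distributive triv_ext_mul +%R.
Proof.
by move=> [a u] [b v] [c w]; rewrite /triv_ext_mul /= mulrDl scalerDl scalerDr addrACA.
Qed.

Fact triv_ext_one_neq0 : triv_ext_one != 0.
Proof. by apply/eqP => -[] /eqP; rewrite oner_eq0. Qed.

End TrivialExtension.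

HB.instance Definition _ (R : comNzRingType) (V : lmodType R) :=
  GRing.Zmodule_isComNzRing.Build (triv_ext V) (@triv_ext_mulA R V)
    (@triv_ext_mulC R V) (@triv_ext_mul1 R V) (@triv_ext_mulDl R V)
    (@triv_ext_one_neq0 R V).

Lemma triv_ext_mulE (R : comNzRingType) (V : lmodType R) a b (u v : V) :
  ((a, u) : triv_ext V) * (b, v) = (a * b, a *: v + b *: u).
Proof. by []. Qed.

Definition triv_ext_scalar (R : comNzRingType) (V : lmodType R) (a : R) : triv_ext V :=
  (a, 0).

Fact triv_ext_scalar_is_zmod_morphism (R : comNzRingType) (V : lmodType R) :
  zmod_morphism (@triv_ext_scalar R V).
Proof. by move=> a b; rewrite /triv_ext_scalar; congr (_, _); rewrite subr0. Qed.

Fact triv_ext_scalar_is_monoid_morphism (R : comNzRingType) (V : lmodType R) :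
  monoid_morphism (@triv_ext_scalar R V).
Proof. by split=> // a b; rewrite triv_ext_mulE !scaler0 addr0. Qed.

HB.instance Definition _ (R : comNzRingType) (V : lmodType R) :=
  GRing.isZmodMorphism.Build R (triv_ext V) (@triv_ext_scalar R V)
    (@triv_ext_scalar_is_zmod_morphism R V).
HB.instance Definition _ (R : comNzRingType) (V : lmodType R) :=
  GRing.isMonoidMorphism.Build R (triv_ext V) (@triv_ext_scalar R V)
    (@triv_ext_scalar_is_monoid_morphism R V).

Section TrivialExtensionEmbedding.
Variables (R : comNzRingType) (V : lmodType R).

Definition triv_ext_vec (v : V) : triv_ext V := (0, v).

Lemma triv_ext_vec0 : triv_ext_vec 0 = 0. Proof. by []. Qed.

Lemma triv_ext_vecD u v x y : triv_ext_vec u = x -> triv_ext_vec v = y ->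
  triv_ext_vec (u + v) = x + y.
Proof. by move=> <- <-; rewrite /triv_ext_vec; congr (_, _); rewrite addr0. Qed.

Lemma triv_ext_vecN v x : triv_ext_vec v = x -> triv_ext_vec (- v) = - x.
Proof. by move=> <-; rewrite /triv_ext_vec; congr (_, _); rewrite oppr0. Qed.

Lemma triv_ext_vecZ a v x : triv_ext_vec v = x ->
  triv_ext_vec (a *: v) = triv_ext_scalar V a * x.
Proof. by move=> <-; rewrite triv_ext_mulE mulr0 scaler0 addr0. Qed.

Lemma triv_ext_vec_eq u v x y :
  triv_ext_vec u = x -> triv_ext_vec v = y -> x = y -> u = v.
Proof. by move=> <- <- [->]. Qed.

End TrivialExtensionEmbedding.

(* [lmod_ring] generalizes the atoms and reifies both sides with one fixed
   instance of V, so that [ring] never compares large terms or instance paths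
   up to conversion. *)
Ltac lmod_atomize t :=
  lazymatch t with
  | ?u + ?v => lmod_atomize u; lmod_atomize v
  | - ?v => lmod_atomize v
  | _ *: ?v => lmod_atomize v
  | 0 => idtac
  | _ => let e := fresh "e" in generalize t; intro e
  end.

Ltac lmod_reify R V t :=
  lazymatch t with
  | ?u + ?v => let pu := lmod_reify R V u in let pv := lmod_reify R V v in
               constr:(@triv_ext_vecD R V _ _ _ _ pu pv)
  | - ?v => let pv := lmod_reify R V v in constr:(@triv_ext_vecN R V _ _ pv)
  | ?a *: ?v => let pv := lmod_reify R V v in constr:(@triv_ext_vecZ R V a _ _ pv)
  | 0 => constr:(@triv_ext_vec0 R V)
  | _ => constr:(erefl (@triv_ext_vec R V t))
  end.

Ltac lmod_ring :=
  lazymatch goal with |- ?u = ?v => lmod_atomize u; lmod_atomize v end;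
  lazymatch goal with |- ?u = ?v =>
    lazymatch type of (triv_ext_vec u) with @triv_ext ?R ?V =>
      let pu := lmod_reify R V u in let pv := lmod_reify R V v in
      apply: (triv_ext_vec_eq pu pv); ring
    end
  end.

Section LinearMap.
Variables (R : pzRingType) (U V : lmodType R) (F : U -> V).
Hypothesis linF : linear F.

Lemma linear_map0 : F 0 = 0.
Proof. by rewrite -[0 in LHS](subrr 0) (zmod_morphism_linear linF) subrr. Qed.

Lemma linear_mapD u v : F (u + v) = F u + F v.
Proof. by rewrite -[u in LHS]scale1r linF scale1r. Qed.

Lemma linear_mapZ a u : F (a *: u) = a *: F u.
Proof. exact: (scalable_linear linF). Qed.

End LinearMap.

Section BilinearMap.
Variables (R : pzRingType) (U1 U2 V : lmodType R) (f : U1 -> U2 -> V).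
Hypotheses (linl : forall y, linear (f^~ y)) (linr : forall x, linear (f x)).

Lemma bilinear_map0l y : f 0 y = 0. Proof. exact: (linear_map0 (linl y)). Qed.
Lemma bilinear_mapDl x x' y : f (x + x') y = f x y + f x' y.
Proof. exact: (linear_mapD (linl y)). Qed.
Lemma bilinear_mapZl a x y : f (a *: x) y = a *: f x y.
Proof. exact: (linear_mapZ (linl y)). Qed.
Lemma bilinear_map0r x : f x 0 = 0. Proof. exact: linear_map0. Qed.
Lemma bilinear_mapDr x y y' : f x (y + y') = f x y + f x y'.
Proof. exact: linear_mapD. Qed.
Lemma bilinear_mapZr a x y : f x (a *: y) = a *: f x y.
Proof. exact: linear_mapZ. Qed.

End BilinearMap.

(** * A calculus for the operators C_a, O_a and a quasi-shuffle product *)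

(* C a, O a, P and one stand for z_(a+1) (concatenation), z_(a+1) o_+ -, *_+ and
   the empty word.  Working with abstract operators keeps every expansion below
   from unfolding the concrete ones. *)
Record qsh_laws (R : comNzRingType) (h : R) (V : lmodType R)
    (C O : nat -> V -> V) (P : V -> V -> V) (one : V) : Prop := QshLaws {
  qsh_C_linear : forall a, linear (C a);
  qsh_O_linear : forall a, linear (O a);
  qsh_P_linearl : forall Y, linear (P^~ Y);
  qsh_P_linearr : forall X, linear (P X);
  qsh_span : forall F G : V -> V, linear F -> linear G -> F one = G one ->
    (forall a X, F (C a X) = G (C a X)) -> F =1 G;
  qsh_OC : forall a b X, O a (C b X) = C (a + b)%N.+1 X + h *: C (a + b)%N X;
  qsh_OO : forall a b X, O a (O b X) = O (a + b)%N.+1 X + h *: O (a + b)%N X;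
  qsh_O1 : forall a, O a one = 0;
  qsh_P1l : forall Y, P one Y = Y;
  qsh_P1r : forall X, P X one = X;
  qsh_PCC : forall a b X Y, P (C a X) (C b Y) =
    C a (P X (C b Y)) + C b (P (C a X) Y) + O a (C b (P X Y))
}.

Section QuasiShuffleCalculus.
Variables (R : comNzRingType) (h : R) (V : lmodType R).
Variables (C O : nat -> V -> V) (P : V -> V -> V) (one : V).
Hypothesis L : qsh_laws h C O P one.

Ltac qsh_push :=
  rewrite ?(linear_mapD (qsh_C_linear L _), linear_mapZ (qsh_C_linear L _),
    linear_map0 (qsh_C_linear L _),
    linear_mapD (qsh_O_linear L _), linear_mapZ (qsh_O_linear L _),
    linear_map0 (qsh_O_linear L _),
    bilinear_mapDl (qsh_P_linearl L), bilinear_mapZl (qsh_P_linearl L),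
    bilinear_map0l (qsh_P_linearl L),
    bilinear_mapDr (qsh_P_linearr L), bilinear_mapZr (qsh_P_linearr L),
    bilinear_map0r (qsh_P_linearr L)).

Ltac qsh_expand :=
  do 3 (qsh_push; rewrite ?(qsh_PCC L, qsh_OC L, qsh_OO L)); qsh_push;
  rewrite ?addSn ?addnS ?addnA.

Ltac qsh_linearity := move=> ? ? ?; cbv beta; qsh_push; lmod_ring.

Ltac qsh_on_span X :=
  move: X; apply: (qsh_span L); [qsh_linearity | qsh_linearity | | ].

Lemma qsh_P_OC a b X Y :
  P (O a X) (C b Y) = O a (P X (C b Y)) + C b (P (O a X) Y) - O a (C b (P X Y)).
Proof.
qsh_on_span X; first by rewrite (qsh_O1 L) !(qsh_P1l L); qsh_push; lmod_ring.
by move=> c U; qsh_expand; lmod_ring.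
Qed.

Lemma qsh_P_CO a b X Y :
  P (C a X) (O b Y) = O b (P (C a X) Y) + C a (P X (O b Y)) - O a (C b (P X Y)).
Proof.
qsh_on_span Y.
  by rewrite (qsh_O1 L) !(qsh_P1r L) !(qsh_OC L) addnC; qsh_push; lmod_ring.
by move=> d Z; qsh_expand; rewrite (addnC b a); lmod_ring.
Qed.

Lemma qsh_P_OO a b X Y :
  P (O a X) (O b Y) = O a (P X (O b Y)) + O b (P (O a X) Y) - O a (O b (P X Y)).
Proof.
qsh_on_span X; first by rewrite (qsh_O1 L) !(qsh_P1l L); qsh_push; lmod_ring.
move=> c U; qsh_on_span Y.
  by rewrite (qsh_O1 L) !(qsh_P1r L); qsh_expand; rewrite (addnC b a); lmod_ring.
by move=> d Z; qsh_expand; rewrite (addnC b a) (addnAC a c b); lmod_ring.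
Qed.

Variables (t : R) (s : V -> V) (T : V -> V -> V).
Hypothesis s_linear : linear s.
Hypothesis s_C : forall a X, s (C a X) = C a (s X) + t *: O a (s X).
Hypothesis s_O : forall a X, s (O a X) = O a (s X).
Hypothesis T_CC : forall a b X Y, T (C a X) (C b Y) =
  C a (T X (C b Y)) + C b (T (C a X) Y)
  + (1 - 2%:R * t) *: O a (C b (T X Y)) + (t ^+ 2 - t) *: O a (O b (T X Y)).

Lemma qsh_intertwine_CC a b X Y :
  s (T X (C b Y)) = P (s X) (s (C b Y)) ->
  s (T (C a X) Y) = P (s (C a X)) (s Y) ->
  s (T X Y) = P (s X) (s Y) ->
  s (T (C a X) (C b Y)) = P (s (C a X)) (s (C b Y)).
Proof.
move=> IH1 IH2 IH3.
rewrite T_CC !(linear_mapD s_linear) !(linear_mapZ s_linear) !(s_C, s_O).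
rewrite IH1 IH2 IH3 !s_C; move: (s X) (s Y) => U Z.
qsh_push; rewrite (qsh_PCC L) qsh_P_OC qsh_P_CO qsh_P_OO; qsh_expand.
lmod_ring.
Qed.

End QuasiShuffleCalculus.

Lemma mlin_supp (f : W -> H1) (p : H1) (d : {fset W}) : (msupp p `<=` d)%fset ->
  mlin f p = \sum_(k <- d) p@_k *: f k.
Proof.
move=> le_pd; rewrite /mlin (big_fset_incl _ le_pd) // => k _ /mcoeff_outdom ->.
by rewrite scale0r.
Qed.

Lemma mlin_is_linear f : linear (mlin f).
Proof.
move=> c p q; have le_p := fsubsetUl (msupp p) (msupp q).
have le_q := fsubsetUr (msupp p) (msupp q).
have le_cpq : (msupp (c *: p + q) `<=` msupp p `|` msupp q)%fset.
  exact: fsubset_trans (msuppD_le _ _) (fsetSU _ (msuppZ_le _ _)).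
rewrite (mlin_supp _ le_cpq) (mlin_supp _ le_p) (mlin_supp _ le_q).
rewrite scaler_sumr -big_split; apply: eq_bigr => k _.
by rewrite mcoeffD mcoeffZ scalerDl scalerA.
Qed.

Lemma mlin_word f w : mlin f (word w) = f w.
Proof. by rewrite /word (mlin_supp _ msuppU_le) big_seq_fset1 mcoeffUU scale1r. Qed.

Lemma eq_mlin (f g : W -> H1) : f =1 g -> mlin f =1 mlin g.
Proof. by move=> eq_fg p; apply: eq_bigr => k _; rewrite eq_fg. Qed.

Lemma linear_mlinE (F : H1 -> H1) : linear F -> F =1 mlin (F \o word).
Proof.
move=> linF p; rewrite {1}[p]monalgE /mlin.
elim: (enum_fset (msupp p)) => [|k s IHs]; rewrite !(big_nil, big_cons).
  exact: linear_map0.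
have -> : << p@_k *g k >> = p@_k *: word k.
  by apply/malgP => k'; rewrite mcoeffZ !mcoeffU mulr_natr.
by rewrite linF IHs.
Qed.

Lemma linear_ext (F G : H1 -> H1) : linear F -> linear G ->
  (forall w, F (word w) = G (word w)) -> F =1 G.
Proof.
move=> linF linG eqFG p; rewrite (linear_mlinE linF) (linear_mlinE linG).
exact: eq_mlin.
Qed.

Lemma mbil_linearl f Y : linear (mbil f ^~ Y).
Proof. exact: mlin_is_linear. Qed.

Lemma mbil_linearr f X : linear (mbil f X).
Proof.
move=> c Y Y'; rewrite /mbil.
rewrite (eq_mlin (g := fun u => c *: mlin (f u) Y + mlin (f u) Y')) => [|u]; last first.
  exact: mlin_is_linear.
rewrite /mlin scaler_sumr -big_split; apply: eq_bigr => u _.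
by rewrite scalerDr !scalerA mulrC.
Qed.

Fixpoint Sc_w (c : Rht) (w : W) : H1 :=
  match w with
  | [::] => word [::]
  | a :: w' => cons_letter a (Sc_w c w') + c *: circ_letter a (Sc_w c w')
  end.

Definition Sc (c : Rht) : H1 -> H1 := mlin (Sc_w c).

Lemma cons_letter_is_linear a : linear (cons_letter a). Proof. exact: mlin_is_linear. Qed.
Lemma circ_letter_is_linear a : linear (circ_letter a). Proof. exact: mlin_is_linear. Qed.
Lemma circ_cons_is_linear a b : linear (circ_cons a b). Proof. exact: mlin_is_linear. Qed.
Lemma S_is_linear : linear S. Proof. exact: mlin_is_linear. Qed.
Lemma Sc_is_linear c : linear (Sc c). Proof. exact: mlin_is_linear. Qed.
Lemma starp_linearl Y : linear (starp^~ Y). Proof. exact: mbil_linearl. Qed.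
Lemma starp_linearr X : linear (starp X). Proof. exact: mbil_linearr. Qed.
Lemma start_linearl Y : linear (start^~ Y). Proof. exact: mbil_linearl. Qed.
Lemma start_linearr X : linear (start X). Proof. exact: mbil_linearr. Qed.

Ltac push_linear :=
  rewrite ?(linear_mapD (cons_letter_is_linear _), linear_mapZ (cons_letter_is_linear _),
    linear_map0 (cons_letter_is_linear _),
    linear_mapD (circ_letter_is_linear _), linear_mapZ (circ_letter_is_linear _),
    linear_map0 (circ_letter_is_linear _),
    linear_mapD (circ_cons_is_linear _ _), linear_mapZ (circ_cons_is_linear _ _),
    linear_map0 (circ_cons_is_linear _ _),
    linear_mapD S_is_linear, linear_mapZ S_is_linear, linear_map0 S_is_linear,
    linear_mapD (Sc_is_linear _), linear_mapZ (Sc_is_linear _),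
    linear_map0 (Sc_is_linear _),
    bilinear_mapDl starp_linearl, bilinear_mapZl starp_linearl,
    bilinear_map0l starp_linearl,
    bilinear_mapDr starp_linearr, bilinear_mapZr starp_linearr,
    bilinear_map0r starp_linearr,
    bilinear_mapDl start_linearl, bilinear_mapZl start_linearl,
    bilinear_map0l start_linearl,
    bilinear_mapDr start_linearr, bilinear_mapZr start_linearr,
    bilinear_map0r start_linearr).

Ltac linearity := move=> ? ? ?; cbv beta; push_linear; lmod_ring.

Ltac on_words X := move: X; apply: linear_ext; [linearity | linearity | cbv beta].

Lemma cons_letter_word a w : cons_letter a (word w) = word (a :: w).
Proof. exact: mlin_word. Qed.

Lemma circ_letter1 a : circ_letter a (word [::]) = 0.
Proof. exact: mlin_word. Qed.

Lemma circ_letter_word a b w :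
  circ_letter a (word (b :: w)) = word ((a + b)%N.+1 :: w) + hbar *: word ((a + b)%N :: w).
Proof. exact: mlin_word. Qed.

Lemma circ_consE a b X : circ_cons a b X = circ_letter a (cons_letter b X).
Proof.
by on_words X => w; rewrite /circ_cons mlin_word cons_letter_word circ_letter_word.
Qed.

Lemma circ_letter_cons a b X :
  circ_letter a (cons_letter b X) = cons_letter (a + b)%N.+1 X + hbar *: cons_letter (a + b)%N X.
Proof. by on_words X => w; rewrite !cons_letter_word circ_letter_word. Qed.

Lemma circ_letter_circ a b X :
  circ_letter a (circ_letter b X) = circ_letter (a + b)%N.+1 X + hbar *: circ_letter (a + b)%N X.
Proof.
on_words X; case=> [|c w]; first by rewrite !circ_letter1; push_linear; lmod_ring.
rewrite !circ_letter_word; push_linear; rewrite !circ_letter_word !addSn !addnS !addnA.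
lmod_ring.
Qed.

Lemma Sc_word c w : Sc c (word w) = Sc_w c w.
Proof. exact: mlin_word. Qed.

Lemma S_Sc : S =1 Sc tt.
Proof. by apply: eq_mlin; elim=> [|a w IHw]; last by rewrite /= IHw. Qed.

Lemma Sc_cons c a X :
  Sc c (cons_letter a X) = cons_letter a (Sc c X) + c *: circ_letter a (Sc c X).
Proof. by on_words X => w; rewrite cons_letter_word !Sc_word. Qed.

Lemma Sc_circ c a X : Sc c (circ_letter a X) = circ_letter a (Sc c X).
Proof.
on_words X; case=> [|b w]; first by rewrite circ_letter1 Sc_word circ_letter1; push_linear.
rewrite circ_letter_word -!cons_letter_word; push_linear.
rewrite !Sc_cons Sc_word /=; push_linear.
by rewrite circ_letter_cons circ_letter_circ; lmod_ring.
Qed.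

Lemma Sc_comp c d X : Sc c (Sc d X) = Sc (c + d) X.
Proof.
on_words X; elim=> [|a w IHw]; first by rewrite !Sc_word.
rewrite !Sc_word /=; push_linear; rewrite -!Sc_word Sc_cons Sc_circ IHw.
lmod_ring.
Qed.

Lemma Sc0 X : Sc 0 X = X.
Proof.
on_words X; elim=> [|a w IHw]; first by rewrite !Sc_word.
by rewrite Sc_word /= -Sc_word IHw scale0r addr0 cons_letter_word.
Qed.

Lemma S_bij : bijective S.
Proof. by exists (Sc (- tt)) => X; rewrite S_Sc Sc_comp ?addNr ?addrN Sc0. Qed.

Lemma S1 : S (word [::]) = word [::].
Proof. exact: mlin_word. Qed.

Lemma S_cons a X : S (cons_letter a X) = cons_letter a (S X) + tt *: circ_letter a (S X).
Proof. by rewrite !S_Sc Sc_cons. Qed.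

Lemma S_circ a X : S (circ_letter a X) = circ_letter a (S X).
Proof. by rewrite !S_Sc Sc_circ. Qed.

Lemma starp_word u v : starp (word u) (word v) = starp_w u v.
Proof. by rewrite /starp /mbil !mlin_word. Qed.

Lemma start_word u v : start (word u) (word v) = start_w u v.
Proof. by rewrite /start /mbil !mlin_word. Qed.

Lemma starp1l X : starp (word [::]) X = X.
Proof. by on_words X => w; rewrite starp_word. Qed.

Lemma starp1r X : starp X (word [::]) = X.
Proof. by on_words X; case=> [|a w]; rewrite starp_word. Qed.

Lemma start1l X : start (word [::]) X = X.
Proof. by on_words X => w; rewrite start_word. Qed.

Lemma start1r X : start X (word [::]) = X.
Proof. by on_words X; case=> [|a w]; rewrite start_word. Qed.

Lemma starp_cons a b X Y :
  starp (cons_letter a X) (cons_letter b Y) =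
    cons_letter a (starp X (cons_letter b Y)) + cons_letter b (starp (cons_letter a X) Y)
    + circ_letter a (cons_letter b (starp X Y)).
Proof.
rewrite -circ_consE; on_words X => u; on_words Y => v.
by rewrite !cons_letter_word !starp_word.
Qed.

Lemma start_cons a b X Y :
  start (cons_letter a X) (cons_letter b Y) =
    cons_letter a (start X (cons_letter b Y)) + cons_letter b (start (cons_letter a X) Y)
    + (1 - 2%:R * tt) *: circ_letter a (cons_letter b (start X Y))
    + (tt ^+ 2 - tt) *: circ_letter a (circ_letter b (start X Y)).
Proof.
rewrite -circ_consE circ_letter_circ; on_words X => u; on_words Y => v.
by rewrite !cons_letter_word !start_word.
Qed.

Lemma H1_qsh_laws : qsh_laws hbar cons_letter circ_letter starp (word [::]).
Proof.
split; [exact: cons_letter_is_linear | exact: circ_letter_is_linear |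
        exact: starp_linearl | exact: starp_linearr | | exact: circ_letter_cons |
        exact: circ_letter_circ | exact: circ_letter1 | exact: starp1l |
        exact: starp1r | exact: starp_cons].
move=> F G linF linG eq1 eqC; apply: linear_ext => // -[|a w] //.
by rewrite -cons_letter_word eqC.
Qed.

Lemma S_start_words u v : S (start (word u) (word v)) = starp (S (word u)) (S (word v)).
Proof.
elim: u v => [|a u IHu] v; first by rewrite start1l S1 starp1l.
elim: v => [|b v IHv]; first by rewrite start1r S1 starp1r.
rewrite -!cons_letter_word in IHv *.
apply: (qsh_intertwine_CC H1_qsh_laws S_is_linear S_cons S_circ start_cons).
- by rewrite cons_letter_word; exact: IHu.
- exact: IHv.
- exact: IHu.
Qed.

Lemma S_start X Y : S (start X Y) = starp (S X) (S Y).
Proof. by on_words X => u; on_words Y => v; exact: S_start_words. Qed.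

Theorem proposition2p4 :
  bijective S /\
  (forall Sinv : H1 -> H1, cancel S Sinv -> cancel Sinv S ->
     forall v w : H1, start v w = Sinv (starp (S v) (S w))).
Proof.
split; first exact: S_bij.
by move=> Sinv SK _ v w; rewrite -S_start SK.
Qed.
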